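(* Let $\psi^{(0)}\in\mathbb{R}$ and $\psi^{(1)}\in\mathbb{R}^2$ be realizable, i.e. $\psi^{(0)}>0$ and $|\psi^{(1)}|\le \psi^{(0)}$, and let $\psi^{(2)}=\psi^{(2)}(\psi^{(0)},\psi^{(1)})$ be given by the $M_1$ closure. Let $\nu\in\mathbb{R}^2$ be an arbitrary unit vector. Then for each choice of sign, the pair $\bigl(\psi^{(0)}\pm \psi^{(1)}\cdot\nu,\ \psi^{(1)}\pm \psi^{(2)}\nu\bigr)$ is realizable.
   Context: Moments of an angular flux $\psi\ge 0$ (a non-negative density or measure, Dirac masses allowed) on the unit sphere are $\psi^{(0)}=\int\psi\,d\Omega$, $\psi^{(1)}=\int\Omega\psi\,d\Omega$, $\psi^{(2)}=\int\Omega\Omega^T\psi\,d\Omega$. A pair $(\psi^{(0)},\psi^{(1)})$ is called realizable if it is the zeroth and first moment of a non-negative density; this holds iff $\psi^{(0)}>0$ and $|\psi^{(1)}|\le\psi^{(0)}$. The $M_1$ closure (entropy closure for photons) is $\psi^{(2)}=D(\psi^{(1)}/\psi^{(0)})\,\psi^{(0)}$ with $D(n)=\frac{1-\chi(|n|)}{2}\mathrm{id}+\frac{3\chi(|n|)-1}{2}\frac{nn^T}{|n|^2}$ and Eddington factor $\chi(f)=\frac{3+4f^2}{5+2\sqrt{4-3f^2}}$ for $f\in[0,1]$; $\psi^{(2)}$ is the second moment of a non-negative density realizing $(\psi^{(0)},\psi^{(1)})$ (the entropy minimizer). Here the problem is two-dimensional: $\psi^{(1)}\in\mathbb{R}^2$,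 $\psi^{(2)}$ is a $2\times2$ matrix. *)

From HB Require Import structures.
From mathcomp Require Import all_boot all_order all_algebra.
Set Implicit Arguments. Unset Strict Implicit. Unset Printing Implicit Defensive.
Import Order.TTheory GRing.Theory Num.Theory.
Local Open Scope ring_scope.

Section M1.
Variable R : rcfType.

Definition dot2 (u v : 'cV[R]_2) : R := \sum_(i < 2) u i 0 * v i 0.
Definition vnorm2 (u : 'cV[R]_2) : R := Num.sqrt (dot2 u u).

(* Realizability of (psi0, psi1): moments of a non-negative measure on the
   unit circle (Dirac masses and the zero measure allowed); the set of such
   moment pairs is the closed cone |psi1| <= psi0 (which forces psi0 >= 0). *)
Definition realizable (p0 : R) (p1 : 'cV[R]_2) : Prop :=
  0 <= p0 /\ vnorm2 p1 <= p0.

Definition eddington (f : R) : R :=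
  (3 + 4 * f ^+ 2) / (5 + 2 * Num.sqrt (4 - 3 * f ^+ 2)).

(* D(n) = (1-chi)/2 id + (3chi-1)/2 n n^T / |n|^2 ; at n = 0 the second term
   has coefficient (3 chi(0) - 1)/2 = 0 and division by 0 is 0 in MathComp. *)
Definition Dmat (n : 'cV[R]_2) : 'M[R]_2 :=
  let chi := eddington (vnorm2 n) in
  ((1 - chi) / 2) *: 1%:M
  + ((3 * chi - 1) / 2 / (vnorm2 n) ^+ 2) *: (n *m n^T).

Definition psi2_M1 (p0 : R) (p1 : 'cV[R]_2) : 'M[R]_2 :=
  p0 *: Dmat (p0^-1 *: p1).

End M1.

From mathcomp Require Import all_boot all_order all_algebra.
From mathcomp Require Import ring lra.
Import Order.TTheory GRing.Theory Num.Theory.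
Set Implicit Arguments.
Unset Strict Implicit.
Unset Printing Implicit Defensive.
Local Open Scope ring_scope.

(* Both realizability and the M1 closure are homogeneous, so it suffices to
   treat psi0 = 1 and psi1 = n with |n| <= 1.  Put r = sqrt (4 - 3 |n|^2),
   so 1 <= r <= 2 and chi(|n|) = (5 - 2 r) / 3; then the closure acts as
   D(n) nu = (r - 1)/3 nu + 3/(2 + r) (n.nu) n.  With t = +-(n.nu), the
   squared norm of n +- D(n) nu falls short of (1 + t)^2 by exactly
   2 (r - 1) (3 t + 2 + r)^2 / (9 (2 + r)) >= 0, while 1 + t >= 0 by
   Cauchy-Schwarz. *)

Section Euclid2.
Variable R : rcfType.
Implicit Types (a b x y : R) (u v : 'cV[R]_2).

Lemma dot2E u v : dot2 u v = u 0 0 * v 0 0 + u 1 0 * v 1 0.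
Proof.
rewrite /dot2 big_ord_recl big_ord1.
by have -> : lift ord0 ord0 = 1 :> 'I_2 by apply/val_inj.
Qed.

Lemma dot2Zl a u v : dot2 (a *: u) v = a * dot2 u v.
Proof. by rewrite !dot2E !mxE; ring. Qed.

Lemma dot2_ge0 u : 0 <= dot2 u u.
Proof. by rewrite dot2E -!expr2 addr_ge0 ?sqr_ge0. Qed.

Lemma dot2_sqr_le u v : dot2 u v ^+ 2 <= dot2 u u * dot2 v v.
Proof.
have lagrange : dot2 u u * dot2 v v - dot2 u v ^+ 2
    = (u 0 0 * v 1 0 - u 1 0 * v 0 0) ^+ 2.
  by rewrite !dot2E; ring.
by rewrite -subr_ge0 lagrange sqr_ge0.
Qed.

Lemma dot2_lincomb x y u v :
  dot2 (x *: u + y *: v) (x *: u + y *: v)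
    = x ^+ 2 * dot2 u u + 2 * x * y * dot2 u v + y ^+ 2 * dot2 v v.
Proof. by rewrite !dot2E !mxE; ring. Qed.

Lemma trmx_mul_col u v : u^T *m v = (dot2 u v)%:M.
Proof.
apply/matrixP => i j; rewrite !ord1 !mxE /dot2 /=.
by apply: eq_bigr => k _; rewrite mxE.
Qed.

Lemma vnorm2_sqr u : vnorm2 u ^+ 2 = dot2 u u.
Proof. exact/sqr_sqrtr/dot2_ge0. Qed.

Lemma vnorm2Z a u : vnorm2 (a *: u) = `|a| * vnorm2 u.
Proof.
rewrite /vnorm2; have -> : dot2 (a *: u) (a *: u) = a ^+ 2 * dot2 u u.
  by rewrite !dot2E !mxE; ring.
by rewrite sqrtrM ?sqr_ge0 // sqrtr_sqr.
Qed.

Lemma vnorm2_le u b : 0 <= b -> (vnorm2 u <= b) = (dot2 u u <= b ^+ 2).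
Proof. by move=> b_ge0; rewrite -{1}(ger0_norm b_ge0) -sqrtr_sqr ler_sqrt ?sqr_ge0. Qed.

Lemma realizableZ a p0 (p1 : 'cV[R]_2) :
  0 <= a -> realizable p0 p1 -> realizable (a * p0) (a *: p1).
Proof.
move=> a_ge0 [p0_ge0 p1_le]; split; first exact: mulr_ge0.
by rewrite vnorm2Z ger0_norm // ler_wpM2l.
Qed.

End Euclid2.

Section M1Closure.
Variable R : rcfType.
Implicit Types (f r t : R) (n nu : 'cV[R]_2).

Definition m1_root f : R := Num.sqrt (4 - 3 * f ^+ 2).

Lemma m1_root_sqr f : f ^+ 2 <= 1 -> m1_root f ^+ 2 = 4 - 3 * f ^+ 2.
Proof. by move=> f_le1; rewrite sqr_sqrtr //; lra. Qed.

Lemma m1_root_ge1 f : f ^+ 2 <= 1 -> 1 <= m1_root f.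
Proof. by move=> f_le1; rewrite -sqrtr1 ler_sqrt; lra. Qed.

Lemma eddington_m1_root f : f ^+ 2 <= 1 -> eddington f = (5 - 2 * m1_root f) / 3.
Proof.
move=> f_le1; have r_ge1 := m1_root_ge1 f_le1.
have f2E : f ^+ 2 = (4 - m1_root f ^+ 2) / 3 by rewrite m1_root_sqr //; field.
by rewrite /eddington -/(m1_root f) f2E; field; lra.
Qed.

Lemma Dmat_mulmx n nu :
  Dmat n *m nu = (1 - eddington (vnorm2 n)) / 2 *: nu
    + ((3 * eddington (vnorm2 n) - 1) / 2 / vnorm2 n ^+ 2 * dot2 n nu) *: n.
Proof.
rewrite /Dmat mulmxDl -!scalemxAl mul1mx -mulmxA trmx_mul_col.
by rewrite mul_mx_scalar scalerA.
Qed.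

Lemma Dmat_mulmx_m1_root n nu : vnorm2 n <= 1 ->
  Dmat n *m nu = (m1_root (vnorm2 n) - 1) / 3 *: nu
    + (3 / (2 + m1_root (vnorm2 n)) * dot2 n nu) *: n.
Proof.
move=> n_le1; set f := vnorm2 n.
have f2_le1 : f ^+ 2 <= 1 by rewrite expr_le1 ?sqrtr_ge0.
rewrite Dmat_mulmx eddington_m1_root //; congr (_ *: _ + _); first by field.
set r := m1_root f; set k := dot2 n nu.
have r_ge1 : 1 <= r := m1_root_ge1 f2_le1.
have f2E : f ^+ 2 = (4 - r ^+ 2) / 3 by rewrite m1_root_sqr //; field.
have [f2_eq0|f2_neq0] := eqVneq (f ^+ 2) 0.
  have k_eq0 : k = 0.
    apply/eqP; rewrite -sqrf_eq0 eq_le sqr_ge0 andbT.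
    by have := dot2_sqr_le n nu; rewrite -vnorm2_sqr -/f f2_eq0 mul0r.
  by rewrite k_eq0 !mulr0.
have r2_neq0 : 2 + r != 0 by lra.
congr (_ *: n); rewrite f2E; field; rewrite r2_neq0 /=.
by move: f2_neq0; rewrite f2E mulf_eq0 negb_or => /andP[].
Qed.

Lemma m1_flux_sqr_le r t : 1 <= r ->
  (1 + 3 / (2 + r) * t) ^+ 2 * ((4 - r ^+ 2) / 3)
    + 2 * ((r - 1) / 3) * t * (1 + 3 / (2 + r) * t) + ((r - 1) / 3) ^+ 2
  <= (1 + t) ^+ 2.
Proof.
move=> r_ge1; rewrite -subr_ge0; set defect := (X in 0 <= X).
have -> : defect = 2 * (r - 1) * (3 * t + 2 + r) ^+ 2 / (9 * (2 + r)).
  by rewrite /defect; field; lra.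
apply: divr_ge0; last lra.
by rewrite mulr_ge0 ?sqr_ge0 //; lra.
Qed.

Lemma realizable_M1_flux n nu s : vnorm2 n <= 1 -> vnorm2 nu = 1 -> s ^+ 2 = 1 ->
  realizable (1 + s * dot2 n nu) (n + s *: (Dmat n *m nu)).
Proof.
move=> n_le1 nu_unit s_sqr; set f := vnorm2 n; set k := dot2 n nu.
have f2_le1 : f ^+ 2 <= 1 by rewrite expr_le1 ?sqrtr_ge0.
set r := m1_root f; have r_ge1 : 1 <= r := m1_root_ge1 f2_le1.
set t := s * k; set a := (r - 1) / 3; set c := 3 / (2 + r).
have t_sqr_le1 : t ^+ 2 <= 1.
  have := dot2_sqr_le n nu; rewrite -!vnorm2_sqr nu_unit -/f -/k.
  by rewrite /t exprMn s_sqr; lra.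
have t_ge : 0 <= 1 + t by nra.
split => //.
have -> : n + s *: (Dmat n *m nu) = (1 + c * t) *: n + (s * a) *: nu.
  rewrite Dmat_mulmx_m1_root // -/f -/r -/a -/c -/k /t.
  by rewrite scalerDr !scalerA scalerDl scale1r [s * (c * k)]mulrCA addrA addrAC.
rewrite vnorm2_le // dot2_lincomb -!vnorm2_sqr nu_unit -/f -/k.
have -> : f ^+ 2 = (4 - r ^+ 2) / 3 by rewrite m1_root_sqr //; field.
have -> : 2 * (1 + c * t) * (s * a) * k = 2 * a * t * (1 + c * t) by rewrite /t; ring.
rewrite expr1n mulr1 exprMn s_sqr mul1r.
exact: m1_flux_sqr_le.
Qed.

End M1Closure.

Theorem lemma1 (R : rcfType) (p0 : R) (p1 : 'cV[R]_2) (nu : 'cV[R]_2)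
  (hp0 : 0 < p0) (hreal : realizable p0 p1) (hnu : vnorm2 nu = 1)
  (s : R) (hs : s = 1 \/ s = -1) :
  realizable (p0 + s * dot2 p1 nu) (p1 + s *: (psi2_M1 p0 p1 *m nu)).
Proof.
have p0_neq0 : p0 != 0 by rewrite gt_eqF.
have psi2E : psi2_M1 p0 p1 = p0 *: Dmat (p0^-1 *: p1) by [].
rewrite psi2E; set n := p0^-1 *: p1.
have p1E : p1 = p0 *: n by rewrite /n scalerA divff // scale1r.
have n_le1 : vnorm2 n <= 1.
  case: hreal => _ p1_le.
  by rewrite /n vnorm2Z ger0_norm ?invr_ge0 ?(ltW hp0) // ler_pdivrMl // mulr1.
have s_sqr : s ^+ 2 = 1 by case: hs => ->; rewrite ?sqrrN expr1n.
have := realizableZ (ltW hp0) (realizable_M1_flux n_le1 hnu s_sqr).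
clearbody n; subst p1.
by rewrite dot2Zl scalerDr -scalemxAl !scalerA mulrDr mulr1 mulrCA [p0 * s]mulrC.
Qed.
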